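(* Let $p$ be a prime number, $G$ a transitive group of degree a power of $p$, $H$ a corresponding subgroup of $G$, and $\mathcal{D}$ an admissible set of subgroups of $G$. Consider a subgroup $G_{1}$ of $G$ that contains a $p$-Sylow subgroup of $G$. (i) There is an isomorphism of $G_{1}$-lattices $J_{G/H}\cong J_{G_{1}/(G_{1}\cap H)}$. (ii) The homomorphism $\operatorname{Res}_{G/G_{1}}\colon \text{Ш}_{\mathcal{D}}^{2}(G,J_{G/H})\rightarrow \text{Ш}_{\mathcal{D}_{\cap G_{1}}}^{2}(G_{1},J_{G_{1}/(G_{1}\cap H)})$ is injective, where $\mathcal{D}_{\cap G_1}:=\{D\cap G_1\mid D\in\mathcal{D}\}$.
   Context: A transitive group of degree $n$ is a subgroup of $\mathfrak{S}_n$ acting transitively on $\mathbb{Z}/n$; a corresponding subgroup is $G\cap\mathrm{Stab}_{\mathfrak{S}_n}(i)$. $J_{G/H}$ is defined by $0\to\mathbb{Z}\to\operatorname{Ind}_H^G\mathbb{Z}\to J_{G/H}\to0$. For a set $\mathcal{D}$ of subgroups, $\text{Ш}^2_{\mathcal{D}}(G,M):=\ker\big(H^2(G,M)\to\bigoplus_{D\in\mathcal{D}}H^2(D,M)\big)$; $\mathcal{D}$ is admissible if it contains all cyclic subgroups of $G$ and is closed under conjugation. *)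

From mathcomp Require Import all_boot all_order all_algebra all_fingroup all_solvable.
Set Implicit Arguments. Unset Strict Implicit. Unset Printing Implicit Defensive.
Import GRing.Theory.
Local Open Scope ring_scope.
Local Open Scope group_scope.

(* Ind_L^K Z = Z[K/L] is modelled as integer-valued functions on the
   right cosets (rcosets L K), i.e. on {set gT} but only the values on
   rcosets L K matter; K acts on the left by (g . f)(C) = f (C :* g)%g.
   J_{K/L} = Z[K/L] / Z.N where N = sum of all cosets (the constant
   function 1): two functions represent the same element of J_{K/L}
   iff they differ by a constant on rcosets L K. *)
Section J.
Variable gT : finGroupType.
Notation elt := ({set gT} -> int).

Definition Jeq (K L : {set gT}) (f f' : elt) : Prop :=
  exists c : int, forall C, C \in rcosets L K -> (f C - f' C = c)%R.

Definition Jact (g : gT) (f : elt) : elt := fun C => f (C :* g)%g.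

Definition Jadd (f f' : elt) : elt := fun C => (f C + f' C)%R.
Definition Jzero : elt := fun _ => 0%R.

Definition Jiso (A K L K' L' : {set gT}) (phi : elt -> elt) : Prop :=
  [/\ forall f f', Jeq K L f f' -> Jeq K' L' (phi f) (phi f'),
      forall f f', Jeq K' L' (phi (Jadd f f')) (Jadd (phi f) (phi f')),
      forall g f, g \in A -> Jeq K' L' (phi (Jact g f)) (Jact g (phi f)),
      forall f f', Jeq K' L' (phi f) (phi f') -> Jeq K L f f'
    & forall f', exists f, Jeq K' L' (phi f) f'].

Definition cochain2 := gT -> gT -> elt.

Definition cocycle2 (K L A : {set gT}) (c : cochain2) : Prop :=
  forall g h k, g \in A -> h \in A -> k \in A ->
    Jeq K L (fun C => (c h k (C :* g)%g - c (g * h)%g k C + c g (h * k)%g C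
                       - c g h C)%R) Jzero.

Definition coboundary2 (K L A : {set gT}) (c : cochain2) : Prop :=
  exists b : gT -> elt, forall g h, g \in A -> h \in A ->
    Jeq K L (c g h) (fun C => (b h (C :* g)%g - b (g * h)%g C + b g C)%R).

(* A cocycle representing a class in Sha^2_D(G, J_{G/H}) :=
   ker (H^2(G,J) -> prod_{D in D} H^2(D,J)). *)
Definition sha2_cocycle (G H : {set gT}) (D : {set {group gT}})
    (c : cochain2) : Prop :=
  cocycle2 G H G c /\ forall Dg : {group gT}, Dg \in D -> coboundary2 G H Dg c.

Definition admissible (G : {set gT}) (D : {set {group gT}}) : Prop :=
  [/\ forall Dg : {group gT}, Dg \in D -> Dg \subset G,
      forall x, x \in G -> <[x]>%G \in D
    & forall (Dg : {group gT}) x, Dg \in D -> x \in G -> (Dg :^ x)%G \in D].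

End J.

(* Since #|G : H| = p^k while #|G : G1| is prime to p, the two indices are
   coprime, so H * G1 = G and C |-> H * C identifies the cosets of G1 :&: H in
   G1 with those of H in G; composing with this bijection is the isomorphism of
   (i).  For (ii), let c be a cocycle of G whose restriction to G1 and to every
   cyclic subgroup is a coboundary.  Restriction followed by corestriction is
   multiplication by the index, so #|G : G1| c is a coboundary.  As an
   H-module, J_{G/H} is the permutation module on the cosets other than H, and
   its second cohomology is detected on cyclic subgroups; hence c restricts to
   a coboundary on H as well, #|G : H| c is a coboundary, and by coprimality
   so is c. *)

From mathcomp Require Import all_boot all_order all_algebra all_fingroup all_solvable.
From mathcomp Require Import zify ring.
From Stdlib Require Import ClassicalEpsilon.
Set Implicit Arguments. Unset Strict Implicit. Unset Printing Implicit Defensive.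
Import GRing.Theory.
Local Open Scope group_scope.

(* [lia] identifies atoms only syntactically, whereas the same cochain value
   often occurs in merely convertible forms; [set] identifies them first. *)
Ltac abstract_values f := repeat match goal with
  | |- context [f ?x ?y ?z] => let a := fresh "a" in set a := f x y z; clearbody a
  | |- context [f ?x ?y] => let a := fresh "a" in set a := f x y; clearbody a
  end.

Section JLattice.
Variable gT : finGroupType.
Implicit Types K L : {group gT}.
Notation elt := ({set gT} -> int).

Definition Jsub (f f' : elt) : elt := fun C => (f C - f' C)%R.
Definition Jscale (z : int) (f : elt) : elt := fun C => (z * f C)%R.

Lemma rcosets_refl K L : (L : {set gT}) \in rcosets L K.
Proof. by apply/rcosetsP; exists 1; rewrite ?group1 ?rcoset1. Qed.

Lemma rcosetM_rcosets K L C g : C \in rcosets L K -> g \in K -> C :* g \in rcosets L K.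
Proof.
case/rcosetsP=> x Kx -> Kg; apply/rcosetsP; exists (x * g); first by rewrite groupM.
by rewrite rcosetM.
Qed.

Lemma JeqE K L f f' : Jeq K L f f' <->
  (forall C, C \in rcosets L K -> (f C - f' C = f L - f' L)%R).
Proof.
split; last by move=> h; exists (f L - f' L)%R.
by case=> c e C HC; rewrite e // e // rcosets_refl.
Qed.

Lemma Jeq_ext K L f f' : (forall C, C \in rcosets L K -> f C = f' C) -> Jeq K L f f'.
Proof. by move=> e; exists 0%R => C /e ->; rewrite subrr. Qed.

Lemma Jeq_refl K L f : Jeq K L f f.
Proof. exact: Jeq_ext. Qed.

Lemma Jeq_sym K L f f' : Jeq K L f f' -> Jeq K L f' f.
Proof. by case=> c e; exists (- c)%R => C /e <-; lia. Qed.

Lemma Jeq_trans K L f1 f2 f3 : Jeq K L f1 f2 -> Jeq K L f2 f3 -> Jeq K L f1 f3.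
Proof.
by case=> c e [c' e']; exists (c + c')%R => C HC; rewrite -(e C HC) -(e' C HC); lia.
Qed.

Lemma Jeq_add K L f1 f2 f1' f2' : Jeq K L f1 f1' -> Jeq K L f2 f2' ->
  Jeq K L (Jadd f1 f2) (Jadd f1' f2').
Proof.
case=> c e [c' e']; exists (c + c')%R => C HC.
by rewrite /Jadd -(e C HC) -(e' C HC); lia.
Qed.

Lemma Jeq_sub K L f1 f2 f1' f2' : Jeq K L f1 f1' -> Jeq K L f2 f2' ->
  Jeq K L (Jsub f1 f2) (Jsub f1' f2').
Proof.
case=> c e [c' e']; exists (c - c')%R => C HC.
by rewrite /Jsub -(e C HC) -(e' C HC); lia.
Qed.

Lemma Jeq_act K L g f1 f1' : g \in K -> Jeq K L f1 f1' -> Jeq K L (Jact g f1) (Jact g f1').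
Proof. by move=> Kg [c e]; exists c => C HC; rewrite /Jact e // rcosetM_rcosets. Qed.

Lemma Jeq_sum K L (I : finType) (P : pred I) (F F' : I -> elt) :
  (forall i, P i -> Jeq K L (F i) (F' i)) ->
  Jeq K L (fun C => \sum_(i | P i) F i C)%R (fun C => \sum_(i | P i) F' i C)%R.
Proof.
move=> e; apply/JeqE => C HC; rewrite -!sumrB; apply: eq_bigr => i Pi.
by move/JeqE: (e i Pi); apply.
Qed.

End JLattice.

Section Differentials.
Variable gT : finGroupType.
Notation elt := ({set gT} -> int).

Definition delta1 (b : gT -> elt) g h : elt :=
  fun C => (b h (C :* g) - b (g * h)%g C + b g C)%R.

Definition delta2 (c : cochain2 gT) g h k : elt :=
  fun C => (c h k (C :* g) - c (g * h)%g k C + c g (h * k)%g C - c g h C)%R.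

Lemma cocycle2_subr_delta1 (G H A : {group gT}) c b : cocycle2 G H A c ->
  cocycle2 G H A (fun g h => Jsub (c g h) (delta1 b g h)).
Proof.
move=> cc g h k Ag Ah Ak; move/JeqE: (cc g h k Ag Ah Ak) => e.
apply/JeqE => C HC; have := e C HC; rewrite /Jsub /delta1 /Jzero -!rcosetM !mulgA.
abstract_values c; abstract_values b; lia.
Qed.

End Differentials.

Lemma sum_lcosets_translate (gT : finGroupType) (R : nmodType) (G K : {group gT})
    (F : {set gT} -> R) h : h \in G ->
  (\sum_(L in lcosets K G) F (h *: L)%g = \sum_(L in lcosets K G) F L)%R.
Proof.
move=> Gh; have imT : [set h *: L | L in lcosets K G] = lcosets K G.
  apply/setP => L; apply/imsetP/lcosetsP.
    by case=> L1 /lcosetsP[y Gy ->] ->; exists (h * y); rewrite ?groupM ?lcosetM.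
  case=> y Gy ->; exists ((h^-1 * y) *: K); last by rewrite -lcosetM mulKVg.
  by apply/lcosetsP; exists (h^-1 * y); rewrite ?groupM ?groupV.
rewrite -[in RHS]imT [in RHS]big_imset //= => L1 L2 _ _; exact: lcoset_inj.
Qed.

Section Transfer.
Variables (gT : finGroupType) (G H K : {group gT}).
Hypothesis sKG : K \subset G.
Notation "f ~= f'" := (Jeq G H f f') (at level 70).
Notation J0 := (@Jzero gT).

Definition lrepr x := repr (x *: K).
Definition lfactor x := (lrepr x)^-1 * x.

Lemma repr_lcosets L : L \in lcosets K G -> repr L \in G /\ L = repr L *: K.
Proof.
case/lcosetsP=> y Gy ->.
have : repr (y *: K) \in y *: K by apply: mem_repr (lcoset_refl _ _).
case/lcosetP=> a Ka ->; split; first by rewrite groupM // (subsetP sKG).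
by rewrite lcosetM (lcoset_id Ka).
Qed.

Lemma lreprP x : x \in G ->
  [/\ lrepr x \in G, lfactor x \in K & lrepr x * lfactor x = x].
Proof.
move=> Gx; have : lrepr x \in x *: K by apply: mem_repr (lcoset_refl _ _).
case/lcosetP=> a Ka e; rewrite /lfactor e.
split; first by rewrite groupM // (subsetP sKG).
  by rewrite invMg -mulgA mulVg mulg1 groupV.
by rewrite mulgA mulgV mul1g.
Qed.

Lemma lreprMr x k : k \in K -> lrepr (x * k) = lrepr x.
Proof. by move=> Kk; rewrite /lrepr lcosetM lcoset_id. Qed.

Lemma lrepr_id k : k \in K -> lrepr k = 1.
Proof. by move=> Kk; rewrite /lrepr lcoset_id // repr_group. Qed.

Lemma cocycle2_normalize_right c : cocycle2 G H G c ->
  (forall k k', k \in K -> k' \in K -> c k k' ~= J0) ->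
  exists b, forall x k, x \in G -> k \in K -> Jsub (c x k) (delta1 b x k) ~= J0.
Proof.
move=> cc c0; exists (fun x C => - c (lrepr x) (lfactor x) C)%R => x k Gx Kk.
have Gk : k \in G by apply: (subsetP sKG).
have [Gt Ka ex] := lreprP Gx.
have Ga : lfactor x \in G by apply: (subsetP sKG).
move/JeqE: (cc _ _ _ Gt Ga Gk); rewrite ex => e1.
move/JeqE: (Jeq_act Gt (c0 _ _ Ka Kk)) => e2.
move/JeqE: (Jeq_act Gx (c0 _ _ (group1 K) Kk)) => e3.
have t1 := lrepr_id Kk; have txk := lreprMr x Kk.
have axk : lfactor (x * k) = lfactor x * k by rewrite /lfactor txk mulgA.
have a1 : lfactor k = k by rewrite /lfactor t1 invg1 mul1g.
apply/JeqE => C HC; move: (e1 C HC) (e2 C HC) (e3 C HC).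
rewrite /Jsub /delta1 /Jact /Jzero t1 txk axk a1 !subr0.
abstract_values c; lia.
Qed.

Lemma cocycle2_lcoset c g x k : cocycle2 G H G c ->
  (forall x k, x \in G -> k \in K -> c x k ~= J0) ->
  g \in G -> x \in G -> k \in K -> c g (x * k) ~= c g x.
Proof.
move=> cc c0 Gg Gx Kk; have Gk : k \in G by apply: (subsetP sKG).
move/JeqE: (cc _ _ _ Gg Gx Gk) => e1.
move/JeqE: (Jeq_act Gg (c0 _ _ Gx Kk)) => e2.
move/JeqE: (c0 _ _ (groupM Gg Gx) Kk) => e3.
apply/JeqE => C HC; move: (e1 C HC) (e2 C HC) (e3 C HC).
rewrite /Jact /Jzero; abstract_values c; lia.
Qed.

Lemma cocycle2_index_delta1 c : cocycle2 G H G c ->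
  (forall x k, x \in G -> k \in K -> c x k ~= J0) ->
  forall g h, g \in G -> h \in G ->
  Jscale #|G : K|%:Z (c g h) ~=
  delta1 (fun g C => \sum_(L in lcosets K G) c g (repr L) C)%R g h.
Proof.
move=> cc c0 g h Gg Gh.
set beta := fun g C => (\sum_(L in lcosets K G) c g (repr L) C)%R.
have cocyc : (fun C => \sum_(L in lcosets K G) delta2 c g h (repr L) C)%R ~=
             (fun C => \sum_(L in lcosets K G) J0 C)%R.
  apply: Jeq_sum => L /repr_lcosets[Gt _]; exact: cc.
have shift : (fun C => \sum_(L in lcosets K G) c g (h * repr L)%g C)%R ~=
             (fun C => \sum_(L in lcosets K G) c g (repr (h *: L)%g) C)%R.
  apply: Jeq_sum => L TL; have [Gt eL] := repr_lcosets TL.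
  have ThL : h *: L \in lcosets K G.
    case/lcosetsP: TL => y Gy ->; apply/lcosetsP.
    by exists (h * y); rewrite ?groupM ?lcosetM.
  have [Gt' eL'] := repr_lcosets ThL.
  have Kk : (repr (h *: L))^-1 * (h * repr L) \in K.
    have : h * repr L \in h *: L by rewrite {2}eL -lcosetM; apply: lcoset_refl.
    by rewrite {1}eL' mem_lcoset.
  rewrite -[h * repr L](mulKVg (repr (h *: L))).
  exact: cocycle2_lcoset.
have sum_hgh C : (\sum_(L in lcosets K G) delta2 c g h (repr L) C =
    beta h (C :* g) - beta (g * h)%g C
    + \sum_(L in lcosets K G) c g (h * repr L)%g C - #|G : K|%:Z * c g h C)%R.
  rewrite /delta2 sumrB big_split /= sumrB sumr_const card_lcosets -mulr_natl natz.
  done.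
have sum_shift C : (\sum_(L in lcosets K G) c g (repr (h *: L)%g) C = beta g C)%R.
  exact: (sum_lcosets_translate K (fun L => c g (repr L) C) Gh).
move/JeqE: cocyc => e1; move/JeqE: shift => e2.
apply/JeqE => C HC; move: (e1 C HC) (e2 C HC).
rewrite !sum_hgh !sum_shift !big1_eq /Jscale /delta1 /Jzero.
abstract_values beta; lia.
Qed.

End Transfer.

Lemma coboundary2_index (gT : finGroupType) (G H K : {group gT}) c :
  K \subset G -> cocycle2 G H G c -> coboundary2 G H K c ->
  coboundary2 G H G (fun g h => Jscale #|G : K|%:Z (c g h)).
Proof.
move=> sKG cc [b cb].
pose c1 g h := Jsub (c g h) (delta1 b g h).
have cc1 : cocycle2 G H G c1 := cocycle2_subr_delta1 b cc.
have c10 k k' : k \in K -> k' \in K -> Jeq G H (c1 k k') (@Jzero gT).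
  move=> Kk Kk'; move/JeqE: (cb _ _ Kk Kk') => e; apply/JeqE => C HC.
  move: (e C HC); rewrite /c1 /Jsub /delta1 /Jzero.
  by abstract_values c; abstract_values b; lia.
have [B hB] := cocycle2_normalize_right sKG cc1 c10.
pose c2 g h := Jsub (c1 g h) (delta1 B g h).
have := cocycle2_index_delta1 sKG (cocycle2_subr_delta1 B cc1) hB.
set beta := fun g C => _ => avg.
pose m := (#|G : K|%:Z)%R.
exists (fun g C => beta g C + m * (b g C + B g C))%R => g h Gg Gh.
move/JeqE: (avg g h Gg Gh) => e; apply/JeqE => C HC; move: (e C HC).
suff R D : (Jscale m (c g h) D - delta1 (fun g C => beta g C + m * (b g C + B g C))%R g h D
   = Jscale m (c2 g h) D - delta1 beta g h D)%R by rewrite !R.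
by rewrite /Jscale /c2 /c1 /Jsub /delta1; ring.
Qed.

Lemma cycle_cocycle1_fixed (gT : finGroupType) (s : gT) (C0 : {set gT})
    (a : gT -> {set gT} -> int) :
  C0 :* s = C0 ->
  (forall g h, g \in <[s]> -> h \in <[s]> -> a (g * h)%g C0 = a g C0 + a h (C0 :* g))%R ->
  a s C0 = 0%R.
Proof.
move=> fix0 Ea.
have a1 : a 1 C0 = 0%R.
  by have := Ea 1 1 (group1 _) (group1 _); rewrite mulg1 rcoset1; abstract_values a; lia.
have Ej j : a (s ^+ j) C0 = (j%:Z * a s C0)%R.
  elim: j => [|j IH]; first by rewrite expg0 a1 mul0r.
  rewrite expgS Ea ?mem_cycle ?cycle_id // fix0 IH.
  by rewrite -addn1 PoszD mulrDl mul1r addrC.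
have := Ej #[s]; rewrite expg_order a1 => /esym/eqP.
by rewrite mulf_eq0 eqz_nat (gtn_eqF (order_gt0 s)) => /eqP.
Qed.

Section PointStabilizer.
Variables (gT : finGroupType) (G H : {group gT}).
Hypothesis sHG : H \subset G.
Notation X := (rcosets H G).
Notation N := (#|H|%:Z)%R.
Variable c : cochain2 gT.
Hypothesis cc : cocycle2 G H G c.

(* As an [H]-module, [J_{G/H}] is the permutation module on the cosets other
   than [H]; [cnorm] is the representative of [c] vanishing at the coset [H]. *)
Definition cnorm g h C := (c g h C - c g h H)%R.

Lemma cnorm_cocycle g h k C : g \in H -> h \in H -> k \in H -> C \in X ->
  (cnorm h k (C :* g) - cnorm (g * h)%g k C + cnorm g (h * k)%g C - cnorm g h C = 0)%R.
Proof.
move=> Hg Hh Hk HC; have sH := subsetP sHG.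
move/JeqE: (cc (sH g Hg) (sH h Hh) (sH k Hk)) => e.
by move: (e C HC); rewrite /cnorm /Jzero rcoset_id //; abstract_values c; lia.
Qed.

Definition hsum g C := (\sum_(x in H) cnorm g x C)%R.

Lemma cnorm_delta1 g h C : g \in H -> h \in H -> C \in X ->
  (N * cnorm g h C = delta1 hsum g h C)%R.
Proof.
move=> Hg Hh HC.
have shift : (\sum_(x in H) cnorm g (h * x)%g C = hsum g C)%R.
  by rewrite /hsum [in RHS](reindex_inj (mulgI h)); apply: eq_bigl => x; rewrite /= groupMl.
have S : (\sum_(x in H) (cnorm h x (C :* g) - cnorm (g * h)%g x C
                         + cnorm g (h * x)%g C - cnorm g h C) = 0)%R.
  by apply: big1 => x Hx; apply: cnorm_cocycle.
rewrite sumrB big_split /= sumrB shift sumr_const -mulr_natl natz in S.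
by apply/esym/eqP; rewrite -subr_eq0 S.
Qed.

Lemma dvdz_hsum_cocycle x y D : x \in H -> y \in H -> D \in X ->
  (N %| (hsum (x * y)%g D - hsum x D - hsum y (D :* x))%R)%Z.
Proof.
move=> Hx Hy XD; have e := cnorm_delta1 Hx Hy XD.
by apply/dvdzP; exists (- cnorm x y D)%R; rewrite mulNr mulrC e /delta1; ring.
Qed.

Lemma dvdz_hsum_fixed s C0 : s \in H -> C0 \in X -> C0 :* s = C0 ->
  coboundary2 G H <[s]> c -> (N %| hsum s C0)%Z.
Proof.
move=> Hs XC0 fix0 [b hb].
have sSH : <[s]> \subset H by rewrite cycle_subG.
pose b0 g C := (b g C - b g H)%R.
have cnormE g h C : g \in <[s]> -> h \in <[s]> -> C \in X ->
    cnorm g h C = delta1 b0 g h C.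
  move=> Sg Sh XC; move/JeqE: (hb g h Sg Sh) => e; move: (e C XC).
  rewrite /cnorm /delta1 /b0 rcoset_id ?(subsetP sSH) //.
  by abstract_values c; abstract_values b; lia.
(* On [<[s]>], [hsum - N * b0] is an honest 1-cocycle. *)
pose a g C := (hsum g C - N * b0 g C)%R.
suff /eqP : a s C0 = 0%R by rewrite subr_eq0 => /eqP ->; apply: dvdz_mulr.
apply: cycle_cocycle1_fixed fix0 _ => g h Sg Sh.
have := cnorm_delta1 (subsetP sSH g Sg) (subsetP sSH h Sh) XC0.
rewrite cnormE // /a /delta1 => /eqP; rewrite -subr_eq0 => /eqP q.
by apply/eqP; rewrite -subr_eq0; apply/eqP; rewrite -q; ring.
Qed.

Definition orep C := repr (rcosets C H).
Definition oelt C := odflt 1 [pick h in H | C == orep C :* h].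

Lemma orep_act C g : g \in H -> orep (C :* g) = orep C.
Proof. by move=> Hg; rewrite /orep -rcosetE -!orbitRs (orbit_act 'Rs). Qed.

Lemma orep_rcosets C : exists2 h, h \in H & orep C = C :* h.
Proof. by apply/rcosetsP; apply: mem_repr (orbit_refl 'Rs H C). Qed.

Lemma oeltP C : oelt C \in H /\ C = orep C :* oelt C.
Proof.
have [h0 Hh0 e0] := orep_rcosets C.
rewrite /oelt; case: pickP => [h /andP[Hh /eqP e] // | none].
by have := none h0^-1; rewrite groupV Hh0 e0 rcosetK eqxx.
Qed.

Lemma orep_in C : C \in X -> orep C \in X.
Proof.
have [h0 Hh0 ->] := orep_rcosets C => XC.
by apply: rcosetM_rcosets => //; apply: (subsetP sHG).
Qed.

Definition mu C := hsum (oelt C) (orep C).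

Hypothesis cycH : forall s, s \in H -> coboundary2 G H <[s]> c.

(* Modulo [N], [hsum] is a 1-cocycle on [H] (by [cnorm_delta1]) vanishing on
   the stabilizers of the cosets (by [dvdz_hsum_fixed]); such a cocycle is the
   coboundary of its values [mu] at chosen orbit representatives. *)
Lemma dvdz_hsum_mu g C : g \in H -> C \in X ->
  (N %| (hsum g C - (mu (C :* g) - mu C))%R)%Z.
Proof.
move=> Hg XC.
have [Hw eC] := oeltP C; have [Hw' eCg] := oeltP (C :* g).
rewrite /mu (orep_act C Hg) in eCg *.
set r := orep C in eC eCg *; set w := oelt C in Hw eC *.
set w' := oelt (C :* g) in Hw' eCg *.
have Xr : r \in X by apply: orep_in.
set s := w * g * w'^-1.
have Hs : s \in H by rewrite !groupM ?groupV.
have fix_s : r :* s = r by rewrite /s !rcosetM -eC eCg rcosetK.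
have d1 := dvdz_hsum_cocycle Hw Hg Xr; have d2 := dvdz_hsum_cocycle Hs Hw' Xr.
have d3 := dvdz_hsum_fixed Hs Xr fix_s (cycH Hs).
rewrite -eC in d1; rewrite fix_s /s mulgKV in d2.
have -> : (hsum g C - (hsum w' r - hsum w r) =
   - (hsum (w * g)%g r - hsum w r - hsum g C) +
     (hsum (w * g)%g r - hsum s r - hsum w' r) + hsum s r)%R by ring.
by rewrite rpredD // rpredD // rpredN.
Qed.

Lemma coboundary2_cycles : coboundary2 G H H c.
Proof.
(* [N * b] differs from [hsum] by the coboundary of [mu], which [delta1] kills. *)
pose b g C := ((hsum g C - (mu (C :* g) - mu C))%R %/ N)%Z.
exists b => g h Hg Hh.
have Npos : (0 < N)%R by rewrite ltz_nat cardG_gt0.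
have Hgh : g * h \in H by rewrite groupM.
have cnormE D : D \in X -> cnorm g h D = delta1 b g h D.
  move=> XD; have XDg : D :* g \in X by rewrite rcosetM_rcosets ?(subsetP sHG).
  have e := cnorm_delta1 Hg Hh XD.
  have k1 := divzK (dvdz_hsum_mu Hh XDg); have k2 := divzK (dvdz_hsum_mu Hgh XD).
  have k3 := divzK (dvdz_hsum_mu Hg XD).
  apply: (@mulfI _ N); first by rewrite Order.POrderTheory.gt_eqF.
  rewrite e /delta1 /b !mulrDr !mulrN ![(N * (_ %/ N)%Z)%R]mulrC k1 k2 k3 -rcosetM.
  by rewrite /delta1; ring.
apply/JeqE => C XC; move: (cnormE C XC) (cnormE H (rcosets_refl G H)).
by rewrite /cnorm /delta1; abstract_values c; abstract_values b; lia.
Qed.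

End PointStabilizer.

Section CosetRestriction.
Variables (gT : finGroupType) (G H G1 : {group gT}).
Hypotheses (sG1G : G1 \subset G) (mulHG1 : H * G1 = G).
Notation H1 := (G1 :&: H).

Definition Jrestr (f : {set gT} -> int) : {set gT} -> int := fun C => f (H * C).

Lemma mulg_rcoset_setI y : H * (H1 :* y) = H :* y.
Proof. by rewrite mulgA mulGSid // subsetIr. Qed.

Lemma setI_rcoset y : y \in G1 -> G1 :&: (H :* y) = H1 :* y.
Proof.
move=> G1y; apply/setP => x; rewrite inE !mem_rcoset inE.
by rewrite -(groupMr _ (groupVr G1y)).
Qed.

Lemma rcoset_repr_in x : x \in G -> exists2 y, y \in G1 & H :* x = H :* y.
Proof.
rewrite -mulHG1 => /mulsgP[h y Hh G1y ->]; exists y => //.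
by rewrite rcosetM rcoset_id.
Qed.

Lemma Jiso_Jrestr : Jiso G1 G H G1 H1 Jrestr.
Proof.
split.
- move=> f f' [c e]; exists c => C /rcosetsP[y G1y ->].
  rewrite /Jrestr mulg_rcoset_setI; apply: e.
  by apply/rcosetsP; exists y => //; apply: (subsetP sG1G).
- by move=> f f'; apply: Jeq_refl.
- by move=> g f G1g; apply: Jeq_ext => C _; rewrite /Jrestr /Jact mulgA.
- move=> f f' [c e]; exists c => C /rcosetsP[x Gx ->].
  have [y G1y ->] := rcoset_repr_in Gx.
  have := e (H1 :* y); rewrite /Jrestr mulg_rcoset_setI; apply.
  by apply/rcosetsP; exists y.
- move=> f'; exists (fun C => f' (G1 :&: C)).
  apply: Jeq_ext => C /rcosetsP[y G1y ->].
  by rewrite /Jrestr mulg_rcoset_setI setI_rcoset.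
Qed.

End CosetRestriction.

Section RestrictionAlongJiso.
Variables (gT : finGroupType) (G H G1 : {group gT}).
Notation H1 := (G1 :&: H).
Notation elt := ({set gT} -> int).
Notation "f ~= f'" := (Jeq G H f f') (at level 70).
Notation "f ~1 f'" := (Jeq G1 H1 f f') (at level 70).
Notation J0 := (@Jzero gT).

Variable phi : elt -> elt.
Hypothesis iso : Jiso G1 G H G1 H1 phi.

Lemma Jiso_eq f f' : f ~= f' -> phi f ~1 phi f'.
Proof. by case: iso => h _ _ _ _; apply: h. Qed.

Lemma Jiso_add f f' : phi (Jadd f f') ~1 Jadd (phi f) (phi f').
Proof. by case: iso => _ h _ _ _; apply: h. Qed.

Lemma Jiso_act g f : g \in G1 -> phi (Jact g f) ~1 Jact g (phi f).
Proof. by case: iso => _ _ h _ _; apply: h. Qed.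

Lemma Jiso_inj f f' : phi f ~1 phi f' -> f ~= f'.
Proof. by case: iso => _ _ _ h _; apply: h. Qed.

Lemma Jiso_surj f' : exists f, phi f ~1 f'.
Proof. by case: iso => _ _ _ _ h; apply: h. Qed.

Lemma Jiso_sub f f' : phi (Jsub f f') ~1 Jsub (phi f) (phi f').
Proof.
have e1 : phi f ~1 phi (Jadd (Jsub f f') f').
  by apply: Jiso_eq; apply: Jeq_ext => C _; rewrite /Jadd /Jsub subrK.
move/JeqE: e1 => e1; move/JeqE: (Jiso_add (Jsub f f') f') => e2.
apply/JeqE => C XC; move: (e1 C XC) (e2 C XC).
by rewrite /Jsub /Jadd; abstract_values phi; lia.
Qed.

Lemma Jiso_zero : phi J0 ~1 J0.
Proof.
have e1 : phi J0 ~1 phi (Jadd J0 J0).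
  by apply: Jiso_eq; apply: Jeq_ext => C _; rewrite /Jadd /Jzero addr0.
move/JeqE: e1 => e1; move/JeqE: (Jiso_add J0 J0) => e2.
apply/JeqE => C XC; move: (e1 C XC) (e2 C XC).
by rewrite /Jadd /Jzero; abstract_values phi; lia.
Qed.

Lemma Jiso_Jact_combination g f1 f2 f3 : g \in G1 ->
  phi (Jadd (Jsub (Jact g f1) f2) f3) ~1 Jadd (Jsub (Jact g (phi f1)) (phi f2)) (phi f3).
Proof.
move=> G1g; apply: Jeq_trans (Jiso_add _ _) _; apply: Jeq_add (Jeq_refl _ _ _).
apply: Jeq_trans (Jiso_sub _ _) _; apply: Jeq_sub (Jeq_refl _ _ _).
exact: Jiso_act.
Qed.

Lemma Jiso_delta2 (c : cochain2 gT) g h k : g \in G1 ->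
  phi (delta2 c g h k) ~1 delta2 (fun x y => phi (c x y)) g h k.
Proof.
move=> G1g; apply: Jeq_trans (Jiso_sub _ _) _; apply: Jeq_sub (Jeq_refl _ _ _).
exact: Jiso_Jact_combination.
Qed.

Lemma cocycle2_Jiso c : G1 \subset G -> cocycle2 G H G c ->
  cocycle2 G1 H1 G1 (fun g h => phi (c g h)).
Proof.
move=> sG1G cc g h k G1g G1h G1k; have sub := subsetP sG1G.
have e := Jiso_eq (cc _ _ _ (sub g G1g) (sub h G1h) (sub k G1k)).
exact: Jeq_trans (Jeq_sym (Jiso_delta2 _ _ _ G1g)) (Jeq_trans e Jiso_zero).
Qed.

Lemma coboundary2_Jiso (A : {group gT}) c : coboundary2 G H A c ->
  coboundary2 G1 H1 (A :&: G1) (fun g h => phi (c g h)).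
Proof.
case=> b hb; exists (fun g => phi (b g)) => g h /setIP[Ag G1g] /setIP[Ah _].
exact: Jeq_trans (Jiso_eq (hb g h Ag Ah)) (Jiso_Jact_combination _ _ _ G1g).
Qed.

Lemma coboundary2_Jiso_inv c :
  coboundary2 G1 H1 G1 (fun g h => phi (c g h)) -> coboundary2 G H G1 c.
Proof.
case=> b1 hb1.
have [b hb] : exists b, forall g, phi (b g) ~1 b1 g.
  exists (fun g => proj1_sig (constructive_indefinite_description _ (Jiso_surj (b1 g)))).
  by move=> g; case: constructive_indefinite_description.
exists b => g h G1g G1h; apply: Jiso_inj.
apply: Jeq_trans (hb1 g h G1g G1h) _.
apply: Jeq_trans (Jeq_sym (Jiso_Jact_combination _ _ _ G1g)).
apply: Jeq_add; last exact: Jeq_sym.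
apply: Jeq_sub; last exact: Jeq_sym.
by apply: Jeq_act => //; apply: Jeq_sym.
Qed.

End RestrictionAlongJiso.

Lemma coboundary2_coprime (gT : finGroupType) (G H : {group gT}) c m n :
  coprime m n ->
  coboundary2 G H G (fun g h => Jscale m%:Z (c g h)) ->
  coboundary2 G H G (fun g h => Jscale n%:Z (c g h)) ->
  coboundary2 G H G c.
Proof.
move=> cop [bm hm] [bn hn].
have [u [v Bez]] := Bezoutz m%:Z n%:Z.
have uv1 : (u * m%:Z + v * n%:Z = 1)%R by rewrite Bez /gcdz /= (eqP cop).
pose b g C := (u * bm g C + v * bn g C)%R.
exists b => g h Gg Gh.
move/JeqE: (hm g h Gg Gh) => em; move/JeqE: (hn g h Gg Gh) => en; apply/JeqE => C XC.
have R D : (c g h D - delta1 b g h D =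
   u * (Jscale m%:Z (c g h) D - delta1 bm g h D) +
   v * (Jscale n%:Z (c g h) D - delta1 bn g h D))%R.
  by rewrite -[c g h D]mul1r -uv1 /Jscale /delta1 /b; ring.
change (c g h C - delta1 b g h C = c g h H - delta1 b g h H)%R.
by rewrite !R; congr (_ * _ + _ * _)%R; [apply: em | apply: en].
Qed.

Lemma coboundary2_coprime_index (gT : finGroupType) (G H G1 : {group gT}) c :
  H \subset G -> G1 \subset G -> coprime #|G : G1| #|G : H| ->
  cocycle2 G H G c -> (forall s, s \in H -> coboundary2 G H <[s]> c) ->
  coboundary2 G H G1 c -> coboundary2 G H G c.
Proof.
move=> sHG sG1G cop cc cycH cobG1.
apply: (coboundary2_coprime cop); apply: coboundary2_index => //.
exact: coboundary2_cycles.
Qed.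

Lemma coprime_Sylow_index (gT : finGroupType) (G G1 P : {group gT}) p k :
  prime p -> p.-Sylow(G) P -> P \subset G1 -> G1 \subset G ->
  coprime #|G : G1| (p ^ k).
Proof.
move=> p_pr sylP sPG1 sG1G; rewrite coprime_sym.
apply: (@pnat_coprime p); first by rewrite pnatX pnat_id.
case/and3P: sylP => _ _; apply: pnat_dvd.
by rewrite -(Lagrange_index sG1G sPG1) dvdn_mulr.
Qed.

Unset Implicit Arguments. Set Strict Implicit. Set Printing Implicit Defensive.

Theorem proposition3p12 (p k : nat) (n : nat) (G : {group {perm 'I_n}})
    (i : 'I_n) (D : {set {group {perm 'I_n}}}) (G1 : {group {perm 'I_n}}) :
  prime p -> n = (p ^ k)%N ->
  [transitive G, on [set: 'I_n] | 'P] ->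
  admissible G D ->
  G1 \subset G ->
  (exists P : {group {perm 'I_n}}, p.-Sylow(G) P /\ P \subset G1) ->
  let H := 'C_G[i | 'P] in
  (* (i) *)
  (exists phi, Jiso G1 G H G1 (G1 :&: H) phi) /\
  (* (ii) for the G1-isomorphism phi of (i), Res_{G/G1} (composed with phi)
     maps Sha^2_D(G, J_{G/H}) into Sha^2_{D cap G1}(G1, J_{G1/(G1 cap H)})
     and is injective *)
  (forall phi, Jiso G1 G H G1 (G1 :&: H) phi ->
     forall c : cochain2 _, sha2_cocycle G H D c ->
       let resc := fun g h => phi (c g h) in
       (cocycle2 G1 (G1 :&: H) G1 resc /\
        forall Dg : {group {perm 'I_n}}, Dg \in D ->
          coboundary2 G1 (G1 :&: H) (Dg :&: G1) resc) /\
       (coboundary2 G1 (G1 :&: H) G1 resc -> coboundary2 G H G c)).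
Proof.
move=> p_pr n_pk trG [_ cycD _] sG1G [P [sylP sPG1]] H.
have sHG : H \subset G by apply: subsetIl.
have iGH : #|G : H| = (p ^ k)%N.
  by rewrite /H -card_orbit (atransP trG i (in_setT i)) cardsT card_ord.
have cop : coprime #|G : G1| #|G : H|.
  by rewrite iGH; apply: coprime_Sylow_index sylP sPG1 sG1G.
have mulHG1 : H * G1 = G by apply: coprime_index_mulG; rewrite // coprime_sym.
split; first by exists (Jrestr H); apply: Jiso_Jrestr.
move=> phi iso c [cc cobD] resc; split; first split.
- exact: (cocycle2_Jiso iso sG1G cc).
- by move=> Dg DgD; exact: (coboundary2_Jiso iso (cobD _ DgD)).
- move=> cob1; apply: (coboundary2_coprime_index sHG sG1G cop cc).
    by move=> s Hs; apply/cobD/cycD/(subsetP sHG).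
  exact: (coboundary2_Jiso_inv iso cob1).
Qed.
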